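(* Let $N$ be a lattice of finite rank with basis $\{e_i\}_{i\in I}$, $F\subset I$, $\omega$ a $\mathbb{Q}$-valued skew-symmetric form on $N$ with $\omega(e_i,e_j)\in\mathbb{Z}$ whenever $i\notin F$ or $j\notin F$, $M=\mathrm{Hom}(N,\mathbb{Z})$, $\omega_1:N\to M_{\mathbb{Q}}$, $n\mapsto\omega(n,\cdot)$, and let $\Lambda$ be a $\mathbb{Q}$-valued skew-symmetric form on $M$ such that $\Lambda(\cdot,\omega_1(e_i))=d\,e_i$ (as elements of $N_{\mathbb{Q}}$) for all $i\in I\setminus F$, for a fixed $d\in\mathbb{Q}_{>0}$. Let $M^+$ be the set of nonzero elements of the $\mathbb{Z}_{\geq0}$-span of $\{\omega_1(e_i): i\in I\setminus F\}$, and for $m\in M^+$ let $|m|$ be the largest positive integer $k$ with $\frac1k m\in M^+$. Let $\Bbbk$ be a commutative ring containing $\mathbb{Z}$ and $\Bbbk_t=\Bbbk[t^{\pm1/D}]$ with $D$ a positive integer such that $\Lambda$ and $\omega$ are $\frac1D\mathbb{Z}$-valued. Then for any $a,b\in M^+$, $$\frac{(t^{d|a+b|}-t^{-d|a+b|})(t^{\Lambda(a,b)}-t^{-\Lambda(a,b)})}{(t^{d|a|}-t^{-d|a|})(t^{d|b|}-t^{-d|b|})}\in\Bbbk_t.$$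
   Context: All notation is introduced in the statement; the fraction is a priori an element of the fraction field of $\Bbbk_t$. *)

From mathcomp Require Import all_boot all_order all_algebra.
Set Implicit Arguments. Unset Strict Implicit. Unset Printing Implicit Defensive.
Import Order.TTheory GRing.Theory Num.Theory.
Local Open Scope ring_scope.

(* ---------- Laurent polynomials  k[s^{+-1}]  (s = t^{1/D}) ----------------
   An element is represented as  p * s^{-n}  with p : {poly R}, n : nat,
   i.e. k[s^{+-1}] is presented as the localisation of k[s] at s.          *)
Record laurent (R : comNzRingType) := Laurent { lpoly : {poly R}; lshift : nat }.

Section Laurent.
Variable R : comNzRingType.
Definition leqv (x y : laurent R) : Prop :=
  lpoly x * 'X^(lshift y) = lpoly y * 'X^(lshift x).
Definition ladd (x y : laurent R) : laurent R :=
  Laurent (lpoly x * 'X^(lshift y) + lpoly y * 'X^(lshift x)) (lshift x + lshift y).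
Definition lopp (x : laurent R) : laurent R := Laurent (- lpoly x) (lshift x).
Definition lsub (x y : laurent R) : laurent R := ladd x (lopp y).
Definition lmul (x y : laurent R) : laurent R :=
  Laurent (lpoly x * lpoly y) (lshift x + lshift y).
Definition spow (z : int) : laurent R :=
  match z with
  | Posz n => Laurent 'X^n 0
  | Negz n => Laurent 1 n.+1
  end.
(* t^x for x in (1/D)Z :  t^x = s^{D x} *)
Definition tpow (D : nat) (x : rat) : laurent R := spow (numq (x * D%:R)).
Definition tsh (D : nat) (x : rat) : laurent R := lsub (tpow D x) (tpow D (- x)).
(* y/x lies in k_t : x divides y in k[s^{+-1}] *)
Definition ldivides (x y : laurent R) : Prop := exists q, leqv (lmul x q) y.
End Laurent.

(* ---------- lattice data ----------------------------------------------------
   N = Z^I with basis (e_i); a skew form omega on N is given by its Gram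
   matrix omega i j = omega(e_i,e_j).  M = Hom(N,Z) = Z^I in the dual basis
   (e_i^* ); elements of M_Q are functions I -> rat (coordinates in the dual
   basis), and Lam i j = Lam(e_i^* , e_j^* ).                                  *)
Section Lattice.
Variable I : finType.

Definition omega1 (omega : I -> I -> rat) (i : I) : {ffun I -> rat} :=
  [ffun j => omega i j].

Definition formM (Lam : I -> I -> rat) (m m' : {ffun I -> rat}) : rat :=
  \sum_i \sum_j m i * m' j * Lam i j.

Definition inMplus (omega : I -> I -> rat) (F : {set I}) (m : {ffun I -> rat})
  : Prop :=
  m != [ffun => 0] /\
  exists c : I -> nat, (forall i, i \in F -> c i = 0%N) /\
    m = [ffun j => \sum_i (c i)%:R * omega1 omega i j].

Definition absM (omega : I -> I -> rat) (F : {set I}) (m : {ffun I -> rat})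
  (k : nat) : Prop :=
  (0 < k)%N /\ inMplus omega F [ffun j => (k%:R)^-1 * m j] /\
  forall k' : nat, (0 < k')%N -> inMplus omega F [ffun j => (k'%:R)^-1 * m j] -> (k' <= k)%N.
End Lattice.

From Pilot Require Import Defs.
From mathcomp Require Import all_boot all_order all_algebra.
From mathcomp Require Import ring.

(* With s = t^(1/D), each factor t^x - t^-x is, up to a unit, X^(2|Dx|) - 1 in
   k[s].  Since Lam(e_j^*, omega_1(e_i)) = d delta_ij, coordinates on the
   omega_1(e_i) are unique; so |m| is the gcd of the coordinates of m,
   gcd(|a|, |b|) divides |a + b|, and Lam(a, b) = d |a| |b| z with z integral.
   With E = dD it remains that (X^A - 1)(X^B - 1) divides (X^N - 1)(X^V - 1) up
   to a power of X when gcd(A, B) | N and A, B | V, which follows from Bezout. *)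

Set Implicit Arguments.
Unset Strict Implicit.
Unset Printing Implicit Defensive.
Import Order.TTheory GRing.Theory Num.Theory.
Local Open Scope ring_scope.

Section LaurentDivisibility.
Variable R : comNzRingType.

Lemma ldivides_poly (x y : laurent R) (h : {poly R}) (j : nat) :
  lpoly x * h = lpoly y * 'X^j -> ldivides x y.
Proof.
move=> Exy; exists (Laurent (h * 'X^(Defs.lshift x)) (j + Defs.lshift y)); rewrite /leqv /=.
by rewrite !exprD mulrA Exy; ring.
Qed.

Lemma lpoly_tsh_spow (z : int) :
  lpoly (lsub (spow R z) (spow R (- z))) = (-1) ^+ (z < 0)%R * ('X^(2 * `|z|) - 1).
Proof.
by case: z => [[|n]|n] /=; rewrite mul2n -addnn exprD !expr0 ?expr1; ring.
Qed.

Lemma lpoly_tsh (D : nat) (x : rat) :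
  lpoly (tsh R D x) =
  (-1) ^+ (numq (x * D%:R) < 0)%R * ('X^(2 * `|numq (x * D%:R)|) - 1).
Proof. by rewrite /tsh /tpow mulNr numqN lpoly_tsh_spow. Qed.

Lemma Xn_sub1_dvd (n m : nat) : (n %| m)%N ->
  exists G : {poly R}, 'X^m - 1 = ('X^n - 1) * G.
Proof.
by case/dvdnP=> q ->; exists (\sum_(i < q) 'X^n ^+ i); rewrite mulnC exprM subrX1.
Qed.

(* From s A = p B + gcd(A, B) and N = r gcd(A, B):
   X^(p r B) (X^N - 1) = (X^(s r A) - 1) - (X^(p r B) - 1). *)
Lemma Xn_sub1_mul_dvd (A B N V : nat) : (0 < A)%N ->
  (gcdn A B %| N)%N -> (A %| V)%N -> (B %| V)%N ->
  exists (H : {poly R}) (j : nat),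
    ('X^A - 1) * ('X^B - 1) * H = ('X^N - 1) * ('X^V - 1) * 'X^j.
Proof.
move=> A_gt0 /dvdnP[r ->] AV BV.
have [p _ /dvdnP[s Es]] := Bezoutr B A_gt0.
have Ebez : (s * r * A = p * r * B + r * gcdn A B)%N.
  by rewrite gcdnC -mulnAC -Es; ring.
have [G1 E1] := Xn_sub1_dvd (dvdn_mull (s * r) (dvdnn A)).
have [G2 E2] := Xn_sub1_dvd BV.
have [G3 E3] := Xn_sub1_dvd (dvdn_mull (p * r) (dvdnn B)).
have [G4 E4] := Xn_sub1_dvd AV.
exists (G1 * G2 - G3 * G4), (p * r * B)%N.
rewrite [RHS]mulrAC; have -> : ('X^(r * gcdn A B) - 1) * 'X^(p * r * B) =
          ('X^(s * r * A) - 1) - ('X^(p * r * B) - 1) :> {poly R}.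
  by rewrite Ebez exprD; ring.
by rewrite E1 E3 [RHS]mulrBl {1}E2 E4; ring.
Qed.

Lemma ldivides_tsh (D : nat) (x y u v : rat) :
  let A := `|numq (x * D%:R)|%N in let B := `|numq (y * D%:R)|%N in
  let N := `|numq (u * D%:R)|%N in let V := `|numq (v * D%:R)|%N in
  (0 < A)%N -> (gcdn A B %| N)%N -> (A %| V)%N -> (B %| V)%N ->
  ldivides (lmul (tsh R D x) (tsh R D y)) (lmul (tsh R D u) (tsh R D v)).
Proof.
move=> A B N V A_gt0 gN AV BV.
have [H [j EH]] := @Xn_sub1_mul_dvd (2 * A) (2 * B) (2 * N) (2 * V)
  ltac:(by rewrite muln_gt0) ltac:(by rewrite -muln_gcdr dvdn_pmul2l)
  ltac:(by rewrite dvdn_pmul2l) ltac:(by rewrite dvdn_pmul2l).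
pose sign (w : rat) := (-1) ^+ (numq (w * D%:R) < 0)%R : {poly R}.
have sign2 w : sign w ^+ 2 = 1 by apply: sqrr_sign.
apply: (@ldivides_poly _ _ (sign x * sign y * sign u * sign v * H) j).
rewrite -[lpoly (lmul _ (tsh R D y))]/(lpoly _ * lpoly _).
rewrite -[lpoly (lmul _ (tsh R D v))]/(lpoly _ * lpoly _).
rewrite !lpoly_tsh -/A -/B -/N -/V -/(sign x) -/(sign y) -/(sign u) -/(sign v).
clearbody sign A B N V.
transitivity (sign x ^+ 2 * sign y ^+ 2 * (sign u * sign v) *
             (('X^(2 * A) - 1) * ('X^(2 * B) - 1) * H)); first ring.
by rewrite !sign2 !mul1r EH; ring.
Qed.

End LaurentDivisibility.

Section Lattice.
Variables (I : finType) (F : {set I}) (omega Lam : I -> I -> rat) (d : rat).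
Implicit Types (m : {ffun I -> rat}) (c : I -> nat).

Definition omega_comb c : {ffun I -> rat} :=
  [ffun j => \sum_i (c i)%:R * omega1 omega i j].

Definition zero_on (A : {set I}) c := forall i, i \in A -> c i = 0%N.

Definition dual_basis (j : I) : {ffun I -> rat} := [ffun l => (l == j)%:R].

Lemma formM_sumr m (x : I -> rat) (f : I -> {ffun I -> rat}) :
  formM Lam m [ffun j => \sum_i x i * f i j] = \sum_i x i * formM Lam m (f i).
Proof.
rewrite /formM; symmetry.
under eq_bigr do rewrite mulr_sumr.
rewrite exchange_big /=; apply: eq_bigr => i1 _.
under eq_bigr do rewrite mulr_sumr.
rewrite exchange_big /=; apply: eq_bigr => j _.
rewrite ffunE mulr_sumr mulr_suml; apply: eq_bigr => i _; ring.
Qed.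

Lemma formM_dual_basis_l j m : formM Lam (dual_basis j) m = \sum_l m l * Lam j l.
Proof.
rewrite /formM (bigD1 j) //= [X in _ + X]big1 ?addr0.
  by apply: eq_bigr => l _; rewrite ffunE eqxx mul1r.
by move=> i /negPf ne; apply: big1 => l _; rewrite ffunE ne !mul0r.
Qed.

Lemma formM_dual_basisE m m' :
  formM Lam m m' = \sum_j m j * formM Lam (dual_basis j) m'.
Proof.
apply: eq_bigr => j _; rewrite formM_dual_basis_l mulr_sumr.
by apply: eq_bigr => l _; ring.
Qed.

Hypothesis compat : forall i, i \notin F -> forall j,
  formM Lam (dual_basis j) (omega1 omega i) = d * (i == j)%:R.

Lemma formM_omega1 m i : i \notin F -> formM Lam m (omega1 omega i) = d * m i.
Proof.
move=> iF; rewrite formM_dual_basisE (bigD1 i) //= compat // eqxx mulr1 big1.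
  by rewrite addr0 mulrC.
by move=> j ne; rewrite compat // eq_sym (negPf ne) !mulr0.
Qed.

Lemma formM_omega_comb m c : zero_on F c ->
  formM Lam m (omega_comb c) = d * \sum_i (c i)%:R * m i.
Proof.
move=> cF; rewrite formM_sumr mulr_sumr; apply: eq_bigr => i _.
case: (boolP (i \in F)) => iF; first by rewrite cF // !mul0r mulr0.
by rewrite formM_omega1 //; ring.
Qed.

Hypothesis d_neq0 : d != 0.

Lemma omega_comb_inj c1 c2 : zero_on F c1 -> zero_on F c2 ->
  omega_comb c1 = omega_comb c2 -> c1 =1 c2.
Proof.
move=> c1F c2F E12 j.
suff coordE c : zero_on F c -> formM Lam (dual_basis j) (omega_comb c) = d * (c j)%:R.
  by apply/eqP; rewrite -(eqr_nat rat) -(inj_eq (mulfI d_neq0)) -!coordE // E12.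
move=> cF; rewrite formM_omega_comb // (bigD1 j) //= ffunE eqxx mulr1 big1 ?addr0 //.
by move=> i /negPf ne; rewrite ffunE ne mulr0.
Qed.

Lemma omega_comb_scale m k c : (0 < k)%N ->
  [ffun j => k%:R^-1 * m j] = omega_comb c -> m = omega_comb (fun i => k * c i)%N.
Proof.
move=> k_gt0 /ffunP Ec; apply/ffunP => j; have := Ec j; rewrite !ffunE => Ecj.
have k_neq0 : k%:R != 0 :> rat by rewrite pnatr_eq0 -lt0n.
rewrite -[m j](mulVKf k_neq0) Ecj mulr_sumr.
by apply: eq_bigr => i _; rewrite natrM mulrA.
Qed.

Lemma omega_combD c1 c2 :
  omega_comb (fun i => c1 i + c2 i)%N = [ffun j => omega_comb c1 j + omega_comb c2 j].
Proof.
apply/ffunP => j; rewrite !ffunE -big_split /=.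
by apply: eq_bigr => i _; rewrite natrD mulrDl.
Qed.

Lemma zero_on_scale A k c : zero_on A c -> zero_on A (fun i => k * c i)%N.
Proof. by move=> cA i /cA ->; rewrite muln0. Qed.

Lemma absM_neq0 m n : absM omega F m n -> m != [ffun => 0].
Proof.
case=> _ [[+ _] _]; apply: contraNneq => ->.
by apply/eqP/ffunP => j; rewrite !ffunE mulr0.
Qed.

Lemma inMplus_divn m c L : m != [ffun => 0] -> zero_on F c -> m = omega_comb c ->
  (0 < L)%N -> (forall i, L %| c i)%N -> inMplus omega F [ffun j => L%:R^-1 * m j].
Proof.
move=> m_neq0 cF Em L_gt0 Lc; have L_neq0 : L%:R != 0 :> rat by rewrite pnatr_eq0 -lt0n.
split.
  apply: contraNneq m_neq0 => /ffunP m0; apply/eqP/ffunP => j.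
  have := m0 j; rewrite !ffunE => /eqP.
  by rewrite mulf_eq0 invr_eq0 (negPf L_neq0) /= => /eqP.
exists (fun i => c i %/ L)%N; split; first by move=> i /cF ->; rewrite div0n.
apply/ffunP => j; rewrite Em !ffunE mulr_sumr; apply: eq_bigr => i _.
by rewrite -{1}(divnK (Lc i)) natrM -mulrA mulrCA mulKf.
Qed.

(* The maximality in [absM] is applied to the lcm of [k] and [|m|]. *)
Lemma absM_dvd m n k : absM omega F m n -> (0 < k)%N ->
  inMplus omega F [ffun j => k%:R^-1 * m j] -> (k %| n)%N.
Proof.
move=> absm k_gt0 [_ [c' [c'F /(omega_comb_scale k_gt0) Em']]].
have [n_gt0 [[_ [c [cF /(omega_comb_scale n_gt0) Em]]] n_max]] := absm.
have Enk : forall i, (n * c i = k * c' i)%N.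
  by apply: omega_comb_inj; rewrite -?Em -?Em' //; apply: zero_on_scale.
have L_gt0 : (0 < lcmn k n)%N by rewrite lcmn_gt0 k_gt0.
have L_le_n : (lcmn k n <= n)%N.
  apply: n_max => //; apply: inMplus_divn Em L_gt0 _.
  - exact: absM_neq0 absm.
  - exact: zero_on_scale.
  - by move=> i; rewrite dvdn_lcm {1}Enk !dvdn_mulr.
have -> : n = lcmn k n by apply/eqP; rewrite eqn_leq L_le_n dvdn_leq ?dvdn_lcmr.
exact: dvdn_lcml.
Qed.

Lemma gcdn_absM_dvd a b na nb nab :
  absM omega F a na -> absM omega F b nb ->
  absM omega F [ffun j => a j + b j] nab -> (gcdn na nb %| nab)%N.
Proof.
move=> [na_gt0 [[_ [ca [caF Ea]]] _]] [nb_gt0 [[_ [cb [cbF Eb]]] _]] absab.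
have g_gt0 : (0 < gcdn na nb)%N by rewrite gcdn_gt0 na_gt0.
apply: (absM_dvd absab g_gt0).
apply: (@inMplus_divn _ (fun i => na * ca i + nb * cb i)%N) g_gt0 _.
- exact: absM_neq0 absab.
- by move=> i iF; rewrite caF ?cbF ?muln0.
- by rewrite omega_combD -(omega_comb_scale na_gt0 Ea) -(omega_comb_scale nb_gt0 Eb).
- by move=> i; rewrite dvdn_add // dvdn_mulr ?dvdn_gcdl ?dvdn_gcdr.
Qed.

Lemma inMplus_exists_notin m : inMplus omega F m -> exists i, i \notin F.
Proof.
case=> m_neq0 [c [cF Em]]; case: (pickP [pred i | i \notin F]) => [i iF|allF].
  by exists i.
case/eqP: m_neq0; apply/ffunP => j; rewrite Em !ffunE big1 // => i _.
by rewrite cF ?mul0r //; apply/negbFE/allF.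
Qed.

Hypothesis omega_int : forall i j, (i \notin F) || (j \notin F) -> omega i j \is a Num.int.

Lemma formM_omega_comb_int p q ca cb : zero_on F ca -> zero_on F cb ->
  exists z : int, formM Lam (omega_comb (fun i => p * ca i)%N)
                            (omega_comb (fun i => q * cb i)%N) = d * (p * q)%:R * z%:~R.
Proof.
move=> caF cbF; pose w := \sum_i \sum_j (cb i * ca j)%:R * omega j i.
have : w \is a Num.int.
  apply: rpred_sum => i _; apply: rpred_sum => j _.
  case: (boolP (i \in F)) => iF; first by rewrite cbF // mul0n mul0r rpred0.
  by rewrite rpredM ?rpred_nat // omega_int // iF orbT.
case/intrP => z Ez; exists z; rewrite -Ez formM_omega_comb; last exact: zero_on_scale.
rewrite -mulrA; congr (_ * _); rewrite /w !mulr_sumr; apply: eq_bigr => i _.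
rewrite ffunE !mulr_sumr; apply: eq_bigr => j _; rewrite ffunE !natrM; ring.
Qed.

Lemma d_mulD_nat (D : nat) : (0 < D)%N -> 0 < d ->
  (forall i j, Lam i j * D%:R \is a Num.int) -> (exists i, i \notin F) ->
  exists2 E : nat, (0 < E)%N & d * D%:R = E%:R.
Proof.
move=> D_gt0 d_gt0 Lam_D [i iF].
have : d * D%:R \is a Num.int.
  have := compat iF i; rewrite eqxx mulr1 formM_dual_basis_l => <-.
  rewrite mulr_suml; apply: rpred_sum => l _; rewrite ffunE -mulrA.
  by rewrite rpredM ?Lam_D // omega_int // iF.
case/intrP => z Ez; have z_gt0 : 0 < z by rewrite -(ltr0z rat) -Ez mulr_gt0 ?ltr0n.
by exists `|z|%N; rewrite ?absz_gt0 ?gt_eqF // Ez pmulrn gtz0_abs.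
Qed.

End Lattice.

Theorem lemma5p1
  (I : finType) (F : {set I})
  (omega : I -> I -> rat)
  (omega_skew : forall i j, omega i j = - omega j i)
  (omega_int : forall i j, (i \notin F) || (j \notin F) -> omega i j \is a Num.int)
  (Lam : I -> I -> rat)
  (Lam_skew : forall i j, Lam i j = - Lam j i)
  (d : rat) (d_pos : 0 < d)
  (compat : forall i, i \notin F -> forall j,
      formM Lam [ffun l => (l == j)%:R] (omega1 omega i) = d * (i == j)%:R)
  (k : comNzRingType)
  (k_char0 : injective (fun z : int => z%:~R : k))
  (D : nat) (D_pos : (0 < D)%N)
  (Lam_D : forall i j, Lam i j * D%:R \is a Num.int)
  (omega_D : forall i j, omega i j * D%:R \is a Num.int)
  (a b : {ffun I -> rat})
  (a_pos : inMplus omega F a) (b_pos : inMplus omega F b)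
  (na nb nab : nat)
  (abs_a : absM omega F a na) (abs_b : absM omega F b nb)
  (abs_ab : absM omega F [ffun j => a j + b j] nab) :
  ldivides
    (lmul (tsh k D (d * na%:R)) (tsh k D (d * nb%:R)))
    (lmul (tsh k D (d * nab%:R)) (tsh k D (formM Lam a b))).
Proof.
have d_neq0 : d != 0 by rewrite gt_eqF.
have [na_gt0 [[_ [ca [caF /(omega_comb_scale na_gt0) Ea]]] _]] := abs_a.
have [nb_gt0 [[_ [cb [cbF /(omega_comb_scale nb_gt0) Eb]]] _]] := abs_b.
have [E E_gt0 dDE] :=
  d_mulD_nat compat omega_int D_pos d_pos Lam_D (inMplus_exists_notin a_pos).
have [z Lab] := formM_omega_comb_int compat omega_int na nb caF cbF.
rewrite -Ea -Eb in Lab.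
have numq_d n : numq (d * n%:R * D%:R) = (E * n)%N.
  by rewrite mulrAC dDE -natrM pmulrn numq_int.
have numq_Lab : numq (formM Lam a b * D%:R) = (E * na * nb)%N%:Z * z.
  have -> : formM Lam a b * D%:R = ((E * na * nb)%N%:Z * z)%:~R.
    by rewrite Lab intrM -pmulrn !natrM -dDE; ring.
  by rewrite numq_int.
apply: ldivides_tsh; rewrite !numq_d ?numq_Lab ?abszM /=.
- by rewrite muln_gt0 E_gt0.
- by rewrite -muln_gcdr dvdn_pmul2l // (gcdn_absM_dvd compat d_neq0 abs_a abs_b abs_ab).
- by rewrite -!mulnA dvdn_pmul2l // dvdn_mulr.
- by rewrite -!mulnA dvdn_pmul2l // dvdn_mull // dvdn_mulr.
Qed.
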